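(* Let $\mathcal C=(\mathbf C^{(1)},\dots,\mathbf C^{(n)})$ be an MPS in (left-)canonical form centered at site $n$, with contraction $\mathbf C\neq0$ and bond dimensions $D_j\le D$ for $1\le j\le n-1$, and let $\delta$ be an $\epsilon$-perturbation of $\mathcal C$. Then as $\epsilon\to0$, $$\mathscr E_r(\mathcal C,\delta)\le\epsilon\Big(1+\sum_{j=1}^{n-1}\frac{\sqrt{D_j}\,\|C^{[j+1,n]}_\leftarrow\|_2}{\|\mathbf C\|_F}\Big)+O(\epsilon^2)\le\epsilon\big(1+(n-1)\sqrt D\big)+O(\epsilon^2).$$ Moreover the bounds are tight when all bond dimensions equal $D$: with suitable physical dimensions, the quantity $\lim_{\epsilon\to0^+}\epsilon^{-1}\sup_\delta\mathscr E_r(\mathcal C,\delta)$ (supremum over $\epsilon$-perturbations) can be made arbitrarily close to $1+(n-1)\sqrt D$ by a suitable choice of such a canonical MPS $\mathcal C$.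
   Context: MPS: an MPS with $n$ sites is a tensor network on a path: site $j$ carries a physical (uncontracted) leg $p_j$, and for $1\le j\le n-1$ a bond (contracted leg) $b_j$ of dimension $D_j$ joins sites $j$ and $j+1$; $\mathbf C^{(1)}$ has legs $(p_1,b_1)$, $\mathbf C^{(n)}$ has legs $(b_{n-1},p_n)$, and $\mathbf C^{(j)}$ for $1<j<n$ has legs $(b_{j-1},p_j,b_j)$. The contraction $\mathbf C$ sums over all bond indices the product of the site entries. $\mathbf C^{[a,b]}$ is the contraction of sites $a,\dots,b$ only; $C^{[j+1,n]}_\leftarrow$ is the matricization of $\mathbf C^{[j+1,n]}$ with rows indexed by $p_{j+1},\dots,p_n$ and columns by $b_j$. The MPS is in (left-)canonical form centered at site $n$ if for every $j\le n-1$ the matricization of $\mathbf C^{(j)}$ with rows indexed by $(b_{j-1},p_j)$ (just $p_1$ when $j=1$) and columns by $b_j$ is an isometry. An $\epsilon$-perturbation is a tuple $\delta=(\delta^{(i)})_{i=1}^n$, $\delta^{(i)}$ of the shape of $\mathbf C^{(i)}$, with $\|\delta^{(i)}\|_F\le\epsilon\|\mathbf C^{(i)}\|_F$; $\hat{\mathbf C}$ is the contraction of the sites $\mathbf C^{(i)}+\delta^{(i)}$ and $\mathscr E_r(\mathcal C,\delta)=\|\hat{\mathbf C}-\mathbf C\|_F/\|\mathbf C\|_F$. $\|\cdot\|_F$ Frobenius, $\|\cdot\|_2$ spectral norm. *)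

From Stdlib Require Import Reals Lra Lia.
Open Scope R_scope.

Fixpoint rsum (k : nat) (f : nat -> R) : R :=
  match k with
  | O => 0
  | S k' => rsum k' f + f k'
  end.

(** Sum over all physical multi-indices of the sites a, a+1, ..., a+m-1:
    p ranges over functions with p j < d j for those j (other entries 0). *)
Fixpoint msum (a m : nat) (d : nat -> nat) (F : (nat -> nat) -> R) : R :=
  match m with
  | O => F (fun _ => O)
  | S m' => rsum (d a) (fun i =>
              msum (S a) m' d (fun p => F (fun j => if Nat.eqb j a then i else p j)))
  end.

(** Sites are 1..n; site j has physical dimension d j.
    Bond b_j (1 <= j <= n-1) has dimension Dm j; we add dummy boundary bonds
    with Dm 0 = 1 and Dm n = 1, so every site tensor has three legs:
    A j a q b  with  a < Dm (j-1) (left bond), q < d j (physical),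
    b < Dm j (right bond).  Entries outside these ranges are irrelevant. *)
Definition site := nat -> nat -> nat -> nat -> R.

(** seg Dm A a m p : contraction of sites a..a+m-1 at physical index p,
    as a matrix (left bond b_{a-1}) x (right bond b_{a+m-1}). *)
Fixpoint seg (Dm : nat -> nat) (A : site) (a m : nat) (p : nat -> nat)
  : nat -> nat -> R :=
  match m with
  | O => fun x y => if Nat.eqb x y then 1 else 0
  | S m' => fun x y =>
      rsum (Dm (a + m' - 1)%nat)
        (fun z => seg Dm A a m' p x z * A (a + m')%nat z (p (a + m')%nat) y)
  end.

Definition contr (n : nat) (Dm : nat -> nat) (A : site) (p : nat -> nat) : R :=
  seg Dm A 1 n p O O.

Definition frobC (n : nat) (d Dm : nat -> nat) (A : site) : R :=
  sqrt (msum 1 n d (fun p => (contr n Dm A p) ^ 2)).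

Definition siteF (d Dm : nat -> nat) (A : site) (j : nat) : R :=
  sqrt (rsum (Dm (j - 1)%nat) (fun a => rsum (d j) (fun q =>
          rsum (Dm j) (fun b => (A j a q b) ^ 2)))).

Definition mps_shape (n : nat) (Dm : nat -> nat) : Prop :=
  (1 <= n)%nat /\ Dm O = 1%nat /\ Dm n = 1%nat.

(** Left-canonical form centered at site n: for 1 <= j <= n-1 the
    matricization (b_{j-1},p_j) x b_j of site j is an isometry (Q^T Q = I). *)
Definition left_canonical (n : nat) (d Dm : nat -> nat) (A : site) : Prop :=
  forall j, (1 <= j)%nat -> (j <= n - 1)%nat ->
  forall b b', (b < Dm j)%nat -> (b' < Dm j)%nat ->
    rsum (Dm (j - 1)%nat) (fun a => rsum (d j) (fun q => A j a q b * A j a q b'))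
    = (if Nat.eqb b b' then 1 else 0).

Definition contr_nonzero (n : nat) (d Dm : nat -> nat) (A : site) : Prop :=
  exists p : nat -> nat,
    (forall j, (1 <= j)%nat -> (j <= n)%nat -> (p j < d j)%nat) /\
    contr n Dm A p <> 0.

(** s is the spectral norm of the matricization C^{[j+1,n]}_<- (rows indexed by
    p_{j+1},...,p_n, columns by b_j):  s = sup { ||M x||_2 : ||x||_2 <= 1 }. *)
Definition is_spec_right (n : nat) (d Dm : nat -> nat) (A : site) (j : nat)
  (s : R) : Prop :=
  is_lub (fun r => exists x : nat -> R,
            rsum (Dm j) (fun c => (x c) ^ 2) <= 1 /\
            r = sqrt (msum (S j) (n - j) d (fun p =>
                  (rsum (Dm j) (fun c => seg Dm A (S j) (n - j) p c O * x c)) ^ 2)))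
         s.

Definition is_pert (n : nat) (d Dm : nat -> nat) (A : site) (eps : R)
  (delta : site) : Prop :=
  forall j, (1 <= j)%nat -> (j <= n)%nat ->
    siteF d Dm delta j <= eps * siteF d Dm A j.

Definition perturbed (A delta : site) : site :=
  fun j a q b => A j a q b + delta j a q b.

Definition relerr (n : nat) (d Dm : nat -> nat) (A delta : site) : R :=
  sqrt (msum 1 n d (fun p =>
          (contr n Dm (perturbed A delta) p - contr n Dm A p) ^ 2))
  / frobC n d Dm A.

(* Ĉ - C telescopes into the terms Ĉ^{[1,i-1]} δ^{(i)} C^{[i+1,n]}.  To first order Ĉ^{[1,i-1]}
   may be replaced by C^{[1,i-1]}, an isometry in left-canonical form, so the i-th term has norm
   at most ||δ^{(i)}||_F ||C^{[i+1,n]}_<-||_2 <= eps sqrt(D_i) ||C^{[i+1,n]}_<-||_2, because an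
   isometry C^{(i)} has ||C^{(i)}||_F = sqrt(D_i); the last term is at most eps ||C^{(n)}||_F =
   eps ||C||_F.  The cruder bound uses ||C^{[i+1,n]}_<-||_2 <= ||C^{[i+1,n]}||_F = ||C||_F.
   For tightness, an MPS whose contraction is a single unit entry, perturbed along that entry
   at every site, attains eps (1 + (n-1) sqrt D) up to O(eps^2). *)

From Stdlib Require Import Reals Lra Lia FunctionalExtensionality.
Open Scope R_scope.

(** * Finite sums *)

Lemma rsum_ext k f g : (forall i, (i < k)%nat -> f i = g i) -> rsum k f = rsum k g.
Proof. induction k; simpl; intros H; auto. rewrite IHk, H; auto. Qed.

Lemma rsum_add k f g : rsum k (fun i => f i + g i) = rsum k f + rsum k g.
Proof. induction k; simpl; [lra|]. rewrite IHk; lra. Qed.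

Lemma rsum_scal k c f : rsum k (fun i => c * f i) = c * rsum k f.
Proof. induction k; simpl; [lra|]. rewrite IHk; lra. Qed.

Lemma rsum_const k c : rsum k (fun _ => c) = INR k * c.
Proof. induction k; cbn [rsum]; [simpl; lra|]. rewrite IHk, S_INR. ring. Qed.

Lemma rsum_zero k : rsum k (fun _ => 0) = 0.
Proof. rewrite rsum_const. ring. Qed.

Lemma rsum_le k f g : (forall i, (i < k)%nat -> f i <= g i) -> rsum k f <= rsum k g.
Proof.
  induction k; simpl; intros H; [lra|].
  pose proof (H k ltac:(lia)). pose proof (IHk ltac:(intros; apply H; lia)). lra.
Qed.

Lemma rsum_nonneg k f : (forall i, (i < k)%nat -> 0 <= f i) -> 0 <= rsum k f.
Proof. intros H. rewrite <- (rsum_zero k). apply rsum_le; auto. Qed.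

Lemma rsum_le_const k f c : (forall i, (i < k)%nat -> f i <= c) -> rsum k f <= INR k * c.
Proof. intros H. rewrite <- rsum_const. apply rsum_le; auto. Qed.

Lemma rsum_swap k l f :
  rsum k (fun i => rsum l (fun j => f i j)) = rsum l (fun j => rsum k (fun i => f i j)).
Proof. induction k; simpl. { rewrite rsum_zero; auto. } rewrite IHk, <- rsum_add; auto. Qed.

Lemma rsum_delta k a f :
  (a < k)%nat -> rsum k (fun i => (if Nat.eqb i a then 1 else 0) * f i) = f a.
Proof.
  induction k; intros H; [lia|]. simpl. destruct (Nat.eq_dec a k).
  - subst. rewrite Nat.eqb_refl, (rsum_ext _ _ (fun _ => 0)), rsum_zero; [lra|].
    intros i Hi. destruct (Nat.eqb_spec i k); [lia|lra].
  - destruct (Nat.eqb_spec k a); [lia|]. rewrite IHk by lia. lra.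
Qed.

Lemma rsum_mul k l f g :
  rsum k f * rsum l g = rsum k (fun i => rsum l (fun j => f i * g j)).
Proof. induction k; simpl; [lra|]. rewrite <- IHk, rsum_scal. lra. Qed.

Lemma rsum_sq_eq0 k f : rsum k (fun i => f i ^ 2) = 0 -> forall i, (i < k)%nat -> f i = 0.
Proof.
  induction k; intros H i Hi; [lia|]. cbn [rsum] in H.
  assert (0 <= rsum k (fun i => f i ^ 2)) by (apply rsum_nonneg; intros; nra).
  destruct (Nat.eq_dec i k); [subst; nra|]. apply IHk; [nra|lia].
Qed.

Lemma rsum_last k f : (1 <= k)%nat -> rsum k f = rsum (k - 1) f + f (k - 1)%nat.
Proof. intros H. destruct k; [lia|]. simpl. rewrite Nat.sub_0_r. reflexivity. Qed.

Lemma msum_add a m d F G :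
  msum a m d (fun p => F p + G p) = msum a m d F + msum a m d G.
Proof.
  revert a F G; induction m; intros; simpl; auto.
  rewrite <- rsum_add. apply rsum_ext; intros. apply IHm.
Qed.

Lemma msum_scal a m d c F : msum a m d (fun p => c * F p) = c * msum a m d F.
Proof.
  revert a F; induction m; intros; simpl; auto.
  rewrite <- rsum_scal. apply rsum_ext; intros. apply IHm.
Qed.

Lemma msum_le a m d F G : (forall p, F p <= G p) -> msum a m d F <= msum a m d G.
Proof. revert a F G; induction m; intros; simpl; auto. apply rsum_le; intros. apply IHm; auto. Qed.

Lemma msum_zero a m d : msum a m d (fun _ => 0) = 0.
Proof.
  revert a; induction m; intros; simpl; auto.
  rewrite (rsum_ext _ _ (fun _ => 0)); [apply rsum_zero|]. intros; apply IHm.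
Qed.

Lemma msum_nonneg a m d F : (forall p, 0 <= F p) -> 0 <= msum a m d F.
Proof. intros H. rewrite <- (msum_zero a m d). apply msum_le; auto. Qed.

Lemma msum_rsum a m d k F :
  msum a m d (fun p => rsum k (fun i => F p i)) = rsum k (fun i => msum a m d (fun p => F p i)).
Proof.
  revert a F; induction m; intros; simpl; auto.
  rewrite <- rsum_swap. apply rsum_ext; intros. apply IHm.
Qed.

Lemma msum_swap a m b k d F :
  msum a m d (fun p => msum b k d (fun p' => F p p'))
  = msum b k d (fun p' => msum a m d (fun p => F p p')).
Proof.
  revert a F; induction m; intros; simpl; auto.
  rewrite msum_rsum. apply rsum_ext; intros. apply IHm.
Qed.

Lemma msum_ext_below a m d F G :
  (forall p, (forall i, (i < a)%nat -> p i = O) -> F p = G p) -> msum a m d F = msum a m d G.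
Proof.
  revert a F G; induction m; intros a F G H; simpl; [apply H; auto|].
  apply rsum_ext; intros i Hi. apply IHm. intros p Hp. apply H.
  intros j Hj. destruct (Nat.eqb_spec j a); [lia|]. apply Hp; lia.
Qed.

Lemma msum_split a m k d F :
  msum a (m + k) d F =
  msum a m d (fun p => msum (a + m) k d (fun p' =>
    F (fun i => if Nat.ltb i (a + m) then p i else p' i))).
Proof.
  revert a F; induction m; intros a F; simpl.
  - rewrite Nat.add_0_r. apply msum_ext_below. intros p Hp. f_equal. extensionality i.
    destruct (Nat.ltb_spec i a); auto.
  - apply rsum_ext; intros i Hi. rewrite IHm. replace (S a + m)%nat with (a + S m)%nat by lia.
    f_equal. extensionality p. f_equal. extensionality p'. f_equal. extensionality j.
    destruct (Nat.eqb_spec j a), (Nat.ltb_spec j (a + S m)); auto; lia.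
Qed.

Lemma rsum_ge_term k f i : (forall j, 0 <= f j) -> (i < k)%nat -> f i <= rsum k f.
Proof.
  intros Hf Hi. induction k; [lia|]. simpl. destruct (Nat.eq_dec i k).
  - subst. pose proof (rsum_nonneg k f (fun j _ => Hf j)). lra.
  - pose proof (IHk ltac:(lia)). pose proof (Hf k). lra.
Qed.

Lemma msum_ge_term a m d F p :
  (forall q, 0 <= F q) -> (forall i, (a <= i)%nat -> (i < a + m)%nat -> (p i < d i)%nat) ->
  F (fun i => if andb (Nat.leb a i) (Nat.ltb i (a + m)) then p i else O) <= msum a m d F.
Proof.
  revert a F; induction m; intros a F HF Hp; simpl.
  - right. f_equal. extensionality i.
    destruct (Nat.leb_spec a i), (Nat.ltb_spec i (a + 0)); simpl; auto; lia.
  - eapply Rle_trans; [|apply (rsum_ge_term _ _ (p a))];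
      [| intros; apply msum_nonneg; auto | apply Hp; lia].
    eapply Rle_trans; [|apply IHm]; [| auto | intros; apply Hp; lia].
    right. f_equal. extensionality j. destruct (Nat.eqb_spec j a).
    + subst. rewrite Nat.leb_refl. destruct (Nat.ltb_spec a (a + S m)); simpl; auto; lia.
    + destruct (Nat.leb_spec a j), (Nat.leb_spec (S a) j), (Nat.ltb_spec j (a + S m)),
        (Nat.ltb_spec j (S a + m)); simpl; auto; lia.
Qed.

(** * Positive linear functionals *)

(* Cauchy–Schwarz and Minkowski are proved once for any positive linear functional;
   every Frobenius norm below is the square root of such a functional applied to a square. *)
Definition positive_linear {T : Type} (Phi : (T -> R) -> R) : Prop :=
  (forall f g, Phi (fun x => f x + g x) = Phi f + Phi g) /\
  (forall c f, Phi (fun x => c * f x) = c * Phi f) /\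
  (forall f, (forall x, 0 <= f x) -> 0 <= Phi f).

Section PositiveLinear.
Context {T : Type} (Phi : (T -> R) -> R) (HPhi : positive_linear Phi).

Lemma positive_linear_sq_nonneg f : 0 <= Phi (fun x => f x ^ 2).
Proof. apply HPhi. intros; nra. Qed.

Lemma positive_linear_cauchy_schwarz f g :
  (Phi (fun x => f x * g x)) ^ 2 <= Phi (fun x => f x ^ 2) * Phi (fun x => g x ^ 2).
Proof.
  destruct HPhi as [Hadd [Hscal _]].
  set (a := Phi (fun x => f x ^ 2)). set (b := Phi (fun x => g x ^ 2)).
  set (c := Phi (fun x => f x * g x)).
  assert (Hquad : forall t, 0 <= a - 2 * t * c + t ^ 2 * b).
  { intros t. pose proof (positive_linear_sq_nonneg (fun x => f x - t * g x)) as H. cbv beta in H.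
    replace (fun x => (f x - t * g x) ^ 2)
      with (fun x => f x ^ 2 + ((-2 * t) * (f x * g x) + t ^ 2 * g x ^ 2)) in H
      by (extensionality x; ring).
    rewrite Hadd, Hadd, Hscal, Hscal in H. unfold a, b, c. lra. }
  assert (Hb : 0 <= b) by apply positive_linear_sq_nonneg.
  destruct (Req_dec b 0) as [Hb0|Hb0].
  - destruct (Req_dec c 0) as [Hc|Hc]; [rewrite Hc, Hb0; nra|].
    specialize (Hquad ((a + 1) / (2 * c))). rewrite Hb0 in Hquad.
    replace (a - 2 * ((a + 1) / (2 * c)) * c + ((a + 1) / (2 * c)) ^ 2 * 0) with (-1)
      in Hquad by (field; auto). lra.
  - specialize (Hquad (c / b)).
    replace (a - 2 * (c / b) * c + (c / b) ^ 2 * b) with (a - c ^ 2 / b) in Hquad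
      by (field; auto).
    replace (c ^ 2) with (c ^ 2 / b * b) by (field; auto). apply Rmult_le_compat_r; lra.
Qed.

Lemma positive_linear_cauchy_schwarz_sqrt f g :
  Phi (fun x => f x * g x) <= sqrt (Phi (fun x => f x ^ 2)) * sqrt (Phi (fun x => g x ^ 2)).
Proof.
  rewrite <- sqrt_mult by apply positive_linear_sq_nonneg.
  pose proof (positive_linear_cauchy_schwarz f g).
  destruct (Rle_dec (Phi (fun x => f x * g x)) 0).
  - pose proof (sqrt_pos (Phi (fun x => f x ^ 2) * Phi (fun x => g x ^ 2))). lra.
  - rewrite <- (sqrt_pow2 (Phi (fun x => f x * g x))) by lra. apply sqrt_le_1_alt. lra.
Qed.

Lemma positive_linear_minkowski f g :
  sqrt (Phi (fun x => (f x + g x) ^ 2))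
  <= sqrt (Phi (fun x => f x ^ 2)) + sqrt (Phi (fun x => g x ^ 2)).
Proof.
  destruct HPhi as [Hadd [Hscal _]].
  replace (fun x => (f x + g x) ^ 2)
    with (fun x => f x ^ 2 + (2 * (f x * g x) + g x ^ 2)) by (extensionality x; ring).
  rewrite Hadd, Hadd, Hscal. pose proof (positive_linear_cauchy_schwarz_sqrt f g).
  pose proof (positive_linear_sq_nonneg f). pose proof (positive_linear_sq_nonneg g).
  set (a := Phi (fun x => f x ^ 2)) in *. set (b := Phi (fun x => g x ^ 2)) in *.
  pose proof (sqrt_pos a). pose proof (sqrt_pos b).
  rewrite <- (sqrt_pow2 (sqrt a + sqrt b)) by lra. apply sqrt_le_1_alt.
  replace ((sqrt a + sqrt b) ^ 2)
    with (sqrt a * sqrt a + 2 * (sqrt a * sqrt b) + sqrt b * sqrt b) by ring.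
  rewrite !sqrt_sqrt by auto. lra.
Qed.

Lemma positive_linear_minkowski_sum m (F : nat -> T -> R) :
  sqrt (Phi (fun x => (rsum m (fun i => F i x)) ^ 2))
  <= rsum m (fun i => sqrt (Phi (fun x => F i x ^ 2))).
Proof.
  induction m; cbn [rsum].
  - destruct HPhi as [_ [Hscal _]].
    replace (fun _ : T => 0 ^ 2) with (fun x : T => 0 * 0) by (extensionality x; ring).
    rewrite Hscal, Rmult_0_l, sqrt_0. lra.
  - pose proof (positive_linear_minkowski (fun x => rsum m (fun i => F i x)) (F m)). lra.
Qed.

Lemma positive_linear_norm_scal c f :
  sqrt (Phi (fun x => (c * f x) ^ 2)) = Rabs c * sqrt (Phi (fun x => f x ^ 2)).
Proof.
  destruct HPhi as [_ [Hscal _]].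
  replace (fun x => (c * f x) ^ 2) with (fun x => c ^ 2 * f x ^ 2) by (extensionality x; ring).
  rewrite Hscal, sqrt_mult by (try nra; apply positive_linear_sq_nonneg).
  f_equal. rewrite <- sqrt_Rsqr_abs. unfold Rsqr. f_equal; ring.
Qed.

End PositiveLinear.

Lemma positive_linear_rsum k : positive_linear (rsum k).
Proof. split; [|split]; [apply rsum_add | apply rsum_scal | intros; apply rsum_nonneg; auto]. Qed.

Lemma rsum_cauchy_schwarz k f g :
  (rsum k (fun i => f i * g i)) ^ 2 <= rsum k (fun i => f i ^ 2) * rsum k (fun i => g i ^ 2).
Proof. apply (positive_linear_cauchy_schwarz _ (positive_linear_rsum k)). Qed.

(** * Left states *)

(* A left state at cut j is a tensor with physical legs p_1..p_j (read off a multi-index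
   p : nat -> nat) and one open bond b_j; the partial contraction of sites 1..j is one. *)
Definition lstate := (nat -> nat) -> nat -> R.

Section LeftStates.
Variables d Dm : nat -> nat.

Definition lsum (j : nat) (G : (nat -> nat) * nat -> R) : R :=
  msum 1 j d (fun p => rsum (Dm j) (fun y => G (p, y))).

Definition lnorm2 (j : nat) (X : lstate) : R :=
  msum 1 j d (fun p => rsum (Dm j) (fun y => X p y ^ 2)).
Definition lnorm (j : nat) (X : lstate) : R := sqrt (lnorm2 j X).

Definition site_sum (j : nat) (G : nat * nat * nat -> R) : R :=
  rsum (Dm (j - 1)) (fun a => rsum (d j) (fun q => rsum (Dm j) (fun b => G (a, q, b)))).

Lemma positive_linear_lsum j : positive_linear (lsum j).
Proof.
  unfold lsum; split; [|split].
  - intros f g. rewrite <- msum_add. f_equal. extensionality p. apply rsum_add.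
  - intros c f. rewrite <- msum_scal. f_equal. extensionality p. apply rsum_scal.
  - intros f H. apply msum_nonneg. intros. apply rsum_nonneg; auto.
Qed.

Lemma positive_linear_site_sum j : positive_linear (site_sum j).
Proof.
  unfold site_sum; split; [|split].
  - intros f g. rewrite <- rsum_add. apply rsum_ext; intros.
    rewrite <- rsum_add. apply rsum_ext; intros. apply rsum_add.
  - intros c f. rewrite <- rsum_scal. apply rsum_ext; intros.
    rewrite <- rsum_scal. apply rsum_ext; intros. apply rsum_scal.
  - intros f H. apply rsum_nonneg; intros; apply rsum_nonneg; intros; apply rsum_nonneg; auto.
Qed.

Lemma lnorm2_nonneg j X : 0 <= lnorm2 j X.
Proof.
  exact (positive_linear_sq_nonneg _ (positive_linear_lsum j) (fun t => X (fst t) (snd t))).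
Qed.

Lemma lnorm_nonneg j X : 0 <= lnorm j X.
Proof. apply sqrt_pos. Qed.

Lemma lnorm2_zero j : lnorm2 j (fun _ _ => 0) = 0.
Proof.
  unfold lnorm2. transitivity (msum 1 j d (fun _ => 0)); [|apply msum_zero].
  f_equal. extensionality p. transitivity (rsum (Dm j) (fun _ => 0)); [|apply rsum_zero].
  apply rsum_ext; intros; simpl; ring.
Qed.

Lemma lnorm_add j X Y : lnorm j (fun p y => X p y + Y p y) <= lnorm j X + lnorm j Y.
Proof.
  exact (positive_linear_minkowski _ (positive_linear_lsum j)
           (fun t => X (fst t) (snd t)) (fun t => Y (fst t) (snd t))).
Qed.

Lemma lnorm_rsum j m (G : nat -> lstate) :
  lnorm j (fun p y => rsum m (fun i => G i p y)) <= rsum m (fun i => lnorm j (G i)).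
Proof.
  exact (positive_linear_minkowski_sum _ (positive_linear_lsum j) m
           (fun i t => G i (fst t) (snd t))).
Qed.

Lemma siteF_nonneg B j : 0 <= siteF d Dm B j.
Proof. apply sqrt_pos. Qed.

Lemma siteF_sq B j : siteF d Dm B j ^ 2 =
  rsum (Dm (j - 1)) (fun a => rsum (d j) (fun q => rsum (Dm j) (fun b => B j a q b ^ 2))).
Proof.
  unfold siteF. rewrite pow2_sqrt; auto.
  exact (positive_linear_sq_nonneg _ (positive_linear_site_sum j)
           (fun t => B j (fst (fst t)) (snd (fst t)) (snd t))).
Qed.

Lemma siteF_perturbed_le A B j : siteF d Dm (perturbed A B) j <= siteF d Dm A j + siteF d Dm B j.
Proof.
  exact (positive_linear_minkowski _ (positive_linear_site_sum j)
           (fun t => A j (fst (fst t)) (snd (fst t)) (snd t))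
           (fun t => B j (fst (fst t)) (snd (fst t)) (snd t))).
Qed.

Lemma siteF_scal A c j : 0 <= c ->
  siteF d Dm (fun j' a q b => c * A j' a q b) j = c * siteF d Dm A j.
Proof.
  intros Hc. transitivity (Rabs c * siteF d Dm A j); [|rewrite Rabs_pos_eq; auto].
  exact (positive_linear_norm_scal _ (positive_linear_site_sum j) c
           (fun t => A j (fst (fst t)) (snd (fst t)) (snd t))).
Qed.

Definition attach (B : site) (j : nat) (X : lstate) : lstate :=
  fun p y => rsum (Dm (j - 1)) (fun z => X p z * B j z (p j) y).

Definition lcontr (B : site) (m : nat) : lstate := fun p y => seg Dm B 1 m p O y.

Definition depends_upto (j : nat) (X : lstate) : Prop :=
  forall p p', (forall i, (1 <= i)%nat -> (i <= j)%nat -> p i = p' i) ->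
  forall y, X p y = X p' y.

Lemma lcontr_S B m : lcontr B (S m) = attach B (S m) (lcontr B m).
Proof. extensionality p; extensionality y. unfold lcontr, attach. simpl. rewrite ?Nat.sub_0_r. auto. Qed.

Lemma seg_ext B a k p p' x y :
  (forall i, (a <= i)%nat -> (i < a + k)%nat -> p i = p' i) ->
  seg Dm B a k p x y = seg Dm B a k p' x y.
Proof.
  revert y; induction k; intros y H; simpl; auto.
  apply rsum_ext; intros z Hz. rewrite IHk, (H (a + k)%nat) by (try intros; apply H || lia; lia).
  auto.
Qed.

Lemma lcontr_depends B m : depends_upto m (lcontr B m).
Proof. intros p p' H y. apply seg_ext. intros; apply H; lia. Qed.

Lemma attach_depends B j X : depends_upto j X -> depends_upto (S j) (attach B (S j) X).
Proof.
  intros H p p' Hp y. unfold attach. apply rsum_ext; intros.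
  rewrite (H p p'), (Hp (S j)) by (try intros; apply Hp || lia; lia). auto.
Qed.

Lemma attach_add B j X Y :
  attach B j (fun p y => X p y + Y p y) = fun p y => attach B j X p y + attach B j Y p y.
Proof. extensionality p; extensionality y. unfold attach. rewrite <- rsum_add. apply rsum_ext; intros; ring. Qed.

Lemma attach_sub B j X Y :
  attach B j (fun p y => X p y - Y p y) = fun p y => attach B j X p y - attach B j Y p y.
Proof.
  extensionality p; extensionality y. unfold attach.
  rewrite (rsum_ext _ _ (fun z => X p z * B j z (p j) y + (-1) * (Y p z * B j z (p j) y)))
    by (intros; ring).
  rewrite rsum_add, rsum_scal. ring.
Qed.

Lemma attach_perturbed A B j X :
  attach (perturbed A B) j X = fun p y => attach A j X p y + attach B j X p y.
Proof.
  extensionality p; extensionality y. unfold attach, perturbed.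
  rewrite <- rsum_add. apply rsum_ext; intros; ring.
Qed.

Lemma attach_rsum B j k (G : nat -> lstate) :
  attach B j (fun p z => rsum k (fun i => G i p z)) = fun p y => rsum k (fun i => attach B j (G i) p y).
Proof.
  extensionality p; extensionality y. unfold attach.
  rewrite (rsum_ext _ _ (fun z => rsum k (fun i => G i p z * B j z (p j) y))); [apply rsum_swap|].
  intros. rewrite Rmult_comm, <- rsum_scal. apply rsum_ext; intros; ring.
Qed.

Definition extend (j : nat) (p : nat -> nat) (q : nat) : nat -> nat :=
  fun i => if Nat.ltb i (S j) then p i else if Nat.eqb i (S j) then q else O.

Lemma msum_extend j F :
  msum 1 (S j) d F = msum 1 j d (fun p => rsum (d (S j)) (fun q => F (extend j p q))).
Proof. replace (S j) with (j + 1)%nat at 1 by lia. rewrite msum_split. reflexivity. Qed.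

Lemma attach_extend B j X p q y : depends_upto j X ->
  attach B (S j) X (extend j p q) y = rsum (Dm j) (fun z => X p z * B (S j) z q y).
Proof.
  intros H. unfold attach. replace (S j - 1)%nat with j by lia. apply rsum_ext; intros z _.
  rewrite (H (extend j p q) p).
  2:{ intros i Hi Hi'. unfold extend. destruct (Nat.ltb_spec i (S j)); auto; lia. }
  unfold extend. rewrite Nat.ltb_irrefl, Nat.eqb_refl. auto.
Qed.

Definition orthonormal (j : nat) (X : lstate) : Prop :=
  forall z z', (z < Dm j)%nat -> (z' < Dm j)%nat ->
  msum 1 j d (fun p => X p z * X p z') = if Nat.eqb z z' then 1 else 0.

Lemma orthonormal_quad j X (v : nat -> R) : orthonormal j X ->
  msum 1 j d (fun p => (rsum (Dm j) (fun c => v c * X p c)) ^ 2) = rsum (Dm j) (fun c => v c ^ 2).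
Proof.
  intros Hon.
  transitivity (msum 1 j d (fun p => rsum (Dm j) (fun c => rsum (Dm j) (fun c' =>
                  (v c * v c') * (X p c * X p c'))))).
  { f_equal. extensionality p. rewrite <- Rsqr_pow2. unfold Rsqr. rewrite rsum_mul.
    apply rsum_ext; intros; apply rsum_ext; intros; ring. }
  rewrite msum_rsum. apply rsum_ext; intros c Hc. rewrite msum_rsum.
  rewrite (rsum_ext _ _ (fun c' => (if Nat.eqb c' c then 1 else 0) * (v c * v c'))).
  { rewrite rsum_delta by auto. ring. }
  intros c' Hc'. rewrite msum_scal, Hon by auto. rewrite Nat.eqb_sym. destruct (Nat.eqb c c'); ring.
Qed.

(* Orthonormality of X collapses the sum over p_1..p_j, leaving the Gram matrix of site j+1. *)
Lemma attach_gram j X B y y' : depends_upto j X -> orthonormal j X ->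
  msum 1 (S j) d (fun p => attach B (S j) X p y * attach B (S j) X p y') =
  rsum (d (S j)) (fun q => rsum (Dm j) (fun z => B (S j) z q y * B (S j) z q y')).
Proof.
  intros Hdep Hon. rewrite msum_extend.
  transitivity (msum 1 j d (fun p => rsum (d (S j)) (fun q => rsum (Dm j) (fun z => rsum (Dm j)
                  (fun z' => (B (S j) z q y * B (S j) z' q y') * (X p z * X p z')))))).
  { f_equal. extensionality p. apply rsum_ext; intros q _.
    rewrite !attach_extend, rsum_mul by auto.
    apply rsum_ext; intros; apply rsum_ext; intros; ring. }
  rewrite msum_rsum. apply rsum_ext; intros q _. rewrite msum_rsum. apply rsum_ext; intros z Hz.
  rewrite msum_rsum.
  rewrite (rsum_ext _ _ (fun z' => (if Nat.eqb z' z then 1 else 0) * (B (S j) z q y * B (S j) z' q y'))).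
  { apply rsum_delta; auto. }
  intros z' Hz'. rewrite msum_scal, Hon by auto. rewrite Nat.eqb_sym. destruct (Nat.eqb z' z); ring.
Qed.

Lemma lnorm_attach_orthonormal j X B : depends_upto j X -> orthonormal j X ->
  lnorm (S j) (attach B (S j) X) = siteF d Dm B (S j).
Proof.
  intros Hdep Hon. unfold lnorm. rewrite <- (sqrt_pow2 (siteF d Dm B (S j))) by apply siteF_nonneg.
  f_equal. unfold lnorm2. rewrite siteF_sq. replace (S j - 1)%nat with j by lia.
  transitivity (rsum (Dm (S j)) (fun y => rsum (d (S j)) (fun q => rsum (Dm j) (fun z =>
                  B (S j) z q y * B (S j) z q y)))).
  { rewrite msum_rsum. apply rsum_ext; intros y _. rewrite <- attach_gram with (X := X) by auto.
    f_equal. extensionality p. ring. }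
  rewrite rsum_swap.
  transitivity (rsum (d (S j)) (fun q => rsum (Dm j) (fun z =>
                  rsum (Dm (S j)) (fun y => B (S j) z q y ^ 2)))); [|apply rsum_swap].
  apply rsum_ext; intros q _. rewrite rsum_swap.
  apply rsum_ext; intros; apply rsum_ext; intros; ring.
Qed.

Lemma lnorm_attach_le j X B : depends_upto j X ->
  lnorm (S j) (attach B (S j) X) <= lnorm j X * siteF d Dm B (S j).
Proof.
  intros Hdep. unfold lnorm. rewrite <- (sqrt_pow2 (siteF d Dm B (S j))) by apply siteF_nonneg.
  rewrite <- sqrt_mult by (try apply lnorm2_nonneg; nra). apply sqrt_le_1_alt.
  unfold lnorm2 at 1. rewrite msum_extend.
  eapply Rle_trans.
  { apply msum_le; intros p. apply rsum_le; intros q _. apply rsum_le; intros y _.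
    rewrite attach_extend by auto. apply rsum_cauchy_schwarz. }
  right. rewrite siteF_sq. replace (S j - 1)%nat with j by lia.
  unfold lnorm2. rewrite Rmult_comm, <- msum_scal. f_equal. extensionality p.
  set (SX := rsum (Dm j) (fun z => X p z ^ 2)).
  transitivity (SX * rsum (d (S j)) (fun q => rsum (Dm (S j)) (fun y =>
                  rsum (Dm j) (fun z => B (S j) z q y ^ 2)))).
  { rewrite <- rsum_scal. apply rsum_ext; intros. rewrite <- rsum_scal. auto. }
  rewrite Rmult_comm. f_equal. symmetry. rewrite rsum_swap. apply rsum_ext; intros. apply rsum_swap.
Qed.

End LeftStates.

(** * Canonical MPS *)

Section Canonical.
Variable n : nat.
Variables d Dm : nat -> nat.
Variable A : site.
Hypothesis Hn : (1 <= n)%nat.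
Hypothesis HD0 : Dm O = 1%nat.
Hypothesis HDn : Dm n = 1%nat.
Hypothesis Hlc : left_canonical n d Dm A.

(* Contracts the unperturbed sites j+1..m onto a left state at cut j; the identity if m <= j. *)
Fixpoint propagate (j m : nat) (X : lstate) : lstate :=
  match m with
  | O => X
  | S m' => if Nat.ltb m' j then X else attach Dm A (S m') (propagate j m' X)
  end.

Lemma propagate_id j X : propagate j j X = X.
Proof. destruct j; simpl; auto. destruct (Nat.ltb_spec j (S j)); auto; lia. Qed.

Lemma propagate_S j m X : (j <= m)%nat -> propagate j (S m) X = attach Dm A (S m) (propagate j m X).
Proof. intros H. simpl. destruct (Nat.ltb_spec m j); auto; lia. Qed.

Lemma propagate_add j m X Y :
  propagate j m (fun p y => X p y + Y p y) = fun p y => propagate j m X p y + propagate j m Y p y.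
Proof. induction m; simpl; auto. destruct (Nat.ltb m j); auto. rewrite IHm, attach_add. auto. Qed.

Lemma propagate_seg j k X p y :
  propagate j (j + S k) X p y = rsum (Dm j) (fun c => X p c * seg Dm A (S j) (S k) p c y).
Proof.
  revert y. induction k; intros y.
  - replace (j + 1)%nat with (S j) by lia. rewrite propagate_S, propagate_id by lia.
    unfold attach. replace (S j - 1)%nat with j by lia.
    apply rsum_ext; intros c Hc. f_equal. simpl. rewrite Nat.add_0_r, Nat.sub_0_r.
    rewrite (rsum_ext _ _ (fun z => (if Nat.eqb z c then 1 else 0) * A (S j) z (p (S j)) y)).
    { symmetry. apply (rsum_delta (Dm j) c (fun z => A (S j) z (p (S j)) y)); auto. }
    intros z _. rewrite Nat.eqb_sym. destruct (Nat.eqb c z); ring.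
  - replace (j + S (S k))%nat with (S (j + S k)) by lia. rewrite propagate_S by lia. unfold attach.
    replace (S (j + S k) - 1)%nat with (j + S k)%nat by lia.
    rewrite (rsum_ext _ _ (fun z => rsum (Dm j) (fun c => X p c *
               (seg Dm A (S j) (S k) p c z * A (S (j + S k)) z (p (S (j + S k))) y)))).
    2:{ intros z _. rewrite IHk, Rmult_comm, <- rsum_scal. apply rsum_ext; intros; ring. }
    rewrite rsum_swap. apply rsum_ext; intros c _. rewrite rsum_scal. f_equal. simpl.
    rewrite !Nat.sub_0_r. replace (S (j + k))%nat with (j + S k)%nat by lia. reflexivity.
Qed.

Lemma lnorm2_full X : lnorm2 d Dm n X = msum 1 n d (fun p => X p O ^ 2).
Proof. unfold lnorm2. rewrite HDn. f_equal. extensionality p. simpl. ring. Qed.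

Lemma lnorm2_propagate j X : (1 <= j)%nat -> (j <= n - 1)%nat -> depends_upto j X ->
  lnorm2 d Dm n (propagate j n X) =
  msum 1 j d (fun p => msum (S j) (n - j) d (fun p' =>
    (rsum (Dm j) (fun c => seg Dm A (S j) (n - j) p' c O * X p c)) ^ 2)).
Proof.
  intros H1 H2 Hdep. rewrite lnorm2_full.
  assert (E : n = (j + S (n - j - 1))%nat) by lia.
  replace (n - j)%nat with (S (n - j - 1)) by lia. set (k := (n - j - 1)%nat) in *.
  rewrite E, msum_split. replace (1 + j)%nat with (S j) by lia.
  f_equal. extensionality p. f_equal. extensionality p'.
  rewrite propagate_seg. f_equal. apply rsum_ext; intros c _. rewrite Rmult_comm. f_equal.
  - apply seg_ext. intros i Hi Hi'. destruct (Nat.ltb_spec i (S j)); auto; lia.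
  - apply Hdep. intros i Hi Hi'. destruct (Nat.ltb_spec i (S j)); auto; lia.
Qed.

Lemma lcontr_propagate j m : (j <= m)%nat -> lcontr Dm A m = propagate j m (lcontr Dm A j).
Proof.
  induction m; intros H; [replace j with O by lia; auto|].
  destruct (Nat.eq_dec j (S m)); [subst; rewrite propagate_id; auto|].
  rewrite propagate_S, lcontr_S, <- IHm by lia. auto.
Qed.

Lemma lcontr_orthonormal j : (j <= n - 1)%nat -> orthonormal d Dm j (lcontr Dm A j).
Proof.
  induction j; intros H z z' Hz Hz'.
  - rewrite HD0 in *. replace z with O by lia. replace z' with O by lia. simpl. unfold lcontr; simpl; ring.
  - rewrite lcontr_S, attach_gram by (try apply lcontr_depends; apply IHj; lia).
    rewrite <- (Hlc (S j)) by lia. replace (S j - 1)%nat with j by lia. apply rsum_swap.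
Qed.

Lemma frobC_sq : frobC n d Dm A ^ 2 = lnorm2 d Dm n (lcontr Dm A n).
Proof. unfold frobC. rewrite pow2_sqrt by (apply msum_nonneg; intros; nra). rewrite lnorm2_full. auto. Qed.

Lemma frobC_nonneg : 0 <= frobC n d Dm A.
Proof. apply sqrt_pos. Qed.

(* C^{[1,n-1]} is an isometry, so contracting it does not change the norm of C^{(n)}. *)
Lemma frobC_last_site : frobC n d Dm A = siteF d Dm A n.
Proof.
  transitivity (lnorm d Dm n (lcontr Dm A n)); [unfold lnorm; rewrite lnorm2_full; auto|].
  replace n with (S (n - 1)) by lia. rewrite lcontr_S.
  apply lnorm_attach_orthonormal; [apply lcontr_depends | apply lcontr_orthonormal; lia].
Qed.

Lemma siteF_canonical j : (1 <= j)%nat -> (j <= n - 1)%nat -> siteF d Dm A j = sqrt (INR (Dm j)).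
Proof.
  intros H1 H2. unfold siteF. f_equal.
  rewrite (rsum_ext _ _ (fun a => rsum (Dm j) (fun b => rsum (d j) (fun q => A j a q b * A j a q b)))).
  2:{ intros. rewrite rsum_swap. apply rsum_ext; intros; apply rsum_ext; intros; ring. }
  rewrite rsum_swap, (rsum_ext _ _ (fun _ => 1)), rsum_const; [ring|].
  intros b Hb. rewrite Hlc, Nat.eqb_refl by auto. auto.
Qed.

(* Both the spectral norms s_j and ||C||_F are such bounds: the former gives the first-order
   term, the latter controls the O(eps^2) remainder. *)
Definition propagation_bound (t : nat -> R) : Prop :=
  forall j, (1 <= j)%nat -> (j <= n - 1)%nat ->
  0 <= t j /\ forall X, depends_upto j X -> lnorm2 d Dm n (propagate j n X) <= t j ^ 2 * lnorm2 d Dm j X.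

Lemma lnorm_propagate_le t j X : propagation_bound t -> (1 <= j)%nat -> (j <= n - 1)%nat ->
  depends_upto j X -> lnorm d Dm n (propagate j n X) <= t j * lnorm d Dm j X.
Proof.
  intros Ht H1 H2 Hdep. destruct (Ht j H1 H2) as [Ht0 Hle]. unfold lnorm.
  rewrite <- (sqrt_pow2 (t j)), <- sqrt_mult by (try apply lnorm2_nonneg; nra).
  apply sqrt_le_1_alt. apply Hle; auto.
Qed.

(* The right block has the same Frobenius norm as C, since the left block is an isometry. *)
Lemma right_block_norm2 j : (1 <= j)%nat -> (j <= n - 1)%nat ->
  msum (S j) (n - j) d (fun p' => rsum (Dm j) (fun c => seg Dm A (S j) (n - j) p' c O ^ 2))
  = frobC n d Dm A ^ 2.
Proof.
  intros H1 H2.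
  rewrite frobC_sq, (lcontr_propagate j n), lnorm2_propagate by (auto; lia || apply lcontr_depends).
  rewrite msum_swap. f_equal. extensionality p'. symmetry.
  apply orthonormal_quad, lcontr_orthonormal; lia.
Qed.

Lemma propagation_bound_frobC : propagation_bound (fun _ => frobC n d Dm A).
Proof.
  intros j H1 H2. split; [apply frobC_nonneg|].
  intros X Hdep. rewrite lnorm2_propagate by auto. unfold lnorm2.
  rewrite <- msum_scal. apply msum_le. intros p.
  eapply Rle_trans; [apply msum_le; intros p'; apply rsum_cauchy_schwarz|].
  right. rewrite <- (right_block_norm2 j), Rmult_comm, <- msum_scal by auto.
  f_equal. extensionality p'. ring.
Qed.

Lemma is_spec_right_nonneg j s : is_spec_right n d Dm A j s -> 0 <= s.
Proof.
  intros [Hub _]. eapply Rle_trans; [apply sqrt_pos|]. apply Hub. exists (fun _ => 0).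
  split; [rewrite (rsum_ext _ _ (fun _ => 0)), rsum_zero by (intros; ring); lra | reflexivity].
Qed.

(* The supremum is over the unit ball; homogeneity extends the bound to every x. *)
Lemma is_spec_right_le j s (x : nat -> R) : is_spec_right n d Dm A j s ->
  msum (S j) (n - j) d (fun p => (rsum (Dm j) (fun c => seg Dm A (S j) (n - j) p c O * x c)) ^ 2)
  <= s ^ 2 * rsum (Dm j) (fun c => x c ^ 2).
Proof.
  intros Hs. pose proof (is_spec_right_nonneg j s Hs) as Hs0. destruct Hs as [Hub _].
  set (M := fun v : nat -> R => msum (S j) (n - j) d (fun p =>
              (rsum (Dm j) (fun c => seg Dm A (S j) (n - j) p c O * v c)) ^ 2)).
  change (M x <= s ^ 2 * rsum (Dm j) (fun c => x c ^ 2)).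
  set (r2 := rsum (Dm j) (fun c => x c ^ 2)).
  assert (Hr2 : 0 <= r2) by (apply rsum_nonneg; intros; nra).
  destruct (Req_dec r2 0) as [Hz|Hz].
  - right. rewrite Hz, Rmult_0_r. unfold M. rewrite <- (msum_zero (S j) (n - j) d).
    f_equal. extensionality p. rewrite (rsum_ext _ _ (fun _ => 0)), rsum_zero; [ring|].
    intros c Hc. rewrite (rsum_sq_eq0 _ _ Hz) by auto. ring.
  - set (r := sqrt r2). assert (Hr : 0 < r) by (apply sqrt_lt_R0; lra).
    assert (Hrr : r * r = r2) by (apply sqrt_sqrt; lra).
    assert (Hscal : M (fun c => x c / r) = M x / r2).
    { unfold M, Rdiv at 2. rewrite Rmult_comm, <- msum_scal. f_equal. extensionality p.
      rewrite (rsum_ext _ _ (fun c => / r * (seg Dm A (S j) (n - j) p c O * x c)))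
        by (intros; unfold Rdiv; ring).
      rewrite rsum_scal, <- Hrr. field. lra. }
    assert (Hunit : rsum (Dm j) (fun c => (x c / r) ^ 2) <= 1).
    { rewrite (rsum_ext _ _ (fun c => / (r * r) * x c ^ 2)), rsum_scal by (intros; field; lra).
      fold r2. rewrite Hrr. right. field. lra. }
    assert (Hsq : sqrt (M x / r2) <= s).
    { rewrite <- Hscal. apply Hub. exists (fun c => x c / r). auto. }
    assert (HM : 0 <= M x) by (apply msum_nonneg; intros; nra).
    assert (M x / r2 <= s ^ 2).
    { rewrite <- (pow2_sqrt (M x / r2)) 
        by (apply Rmult_le_pos; [lra | apply Rlt_le, Rinv_0_lt_compat; lra]).
      apply pow_incr. split; auto. apply sqrt_pos. }
    replace (M x) with (M x / r2 * r2) by (field; lra). apply Rmult_le_compat_r; lra.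
Qed.

Lemma propagation_bound_spec s :
  (forall j, (1 <= j)%nat -> (j <= n - 1)%nat -> is_spec_right n d Dm A j (s j)) ->
  propagation_bound s.
Proof.
  intros Hs j H1 H2. split; [apply (is_spec_right_nonneg j); auto|].
  intros X Hdep. rewrite lnorm2_propagate by auto. unfold lnorm2.
  rewrite <- msum_scal. apply msum_le. intros p. apply is_spec_right_le; auto.
Qed.

(** ** Error propagation *)

Section Perturbation.
Variable delta : site.

Definition err (m : nat) : lstate :=
  fun p y => lcontr Dm (perturbed A delta) m p y - lcontr Dm A m p y.

Definition err_source (i : nat) : lstate := attach Dm delta (S i) (lcontr Dm (perturbed A delta) i).

Lemma err_S m : err (S m) = fun p y => attach Dm A (S m) (err m) p y + err_source m p y.
Proof.
  extensionality p; extensionality y. unfold err, err_source.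
  rewrite !lcontr_S, attach_perturbed, attach_sub. ring.
Qed.

Lemma err_depends m : depends_upto m (err m).
Proof.
  intros p p' H y. unfold err. rewrite (lcontr_depends _ _ m p p'), (lcontr_depends _ A m p p') by auto.
  auto.
Qed.

(* Ĉ - C = Σ_i Ĉ^{[1,i]} δ^{(i+1)} C^{[i+2,n]}. *)
Lemma err_telescope m : err m = fun p y => rsum m (fun i => propagate (S i) m (err_source i) p y).
Proof.
  induction m.
  - extensionality p; extensionality y. unfold err, lcontr. simpl. ring.
  - rewrite err_S, IHm. extensionality p; extensionality y. cbn [rsum].
    rewrite propagate_id, attach_rsum. f_equal. apply rsum_ext; intros i Hi.
    rewrite (propagate_S (S i) m) by lia. auto.
Qed.

Lemma err_source_split i : err_source i =
  fun p y => attach Dm delta (S i) (lcontr Dm A i) p y + attach Dm delta (S i) (err i) p y.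
Proof.
  unfold err_source. rewrite <- attach_add. f_equal.
  extensionality p; extensionality y. unfold err. ring.
Qed.

End Perturbation.

(* Crude a-priori bounds, for eps <= 1, on the perturbed partial contractions ([pert_growth])
   and on their errors divided by eps ([err_growth]); they only enter the O(eps^2) constant. *)
Fixpoint pert_growth (m : nat) : R :=
  match m with O => 1 | S m' => pert_growth m' * (2 * siteF d Dm A (S m')) end.

Fixpoint err_growth (m : nat) : R :=
  match m with O => 0 | S m' => (err_growth m' + pert_growth m') * siteF d Dm A (S m') end.

Lemma pert_growth_nonneg m : 0 <= pert_growth m.
Proof. induction m; simpl; [lra|]. pose proof (siteF_nonneg d Dm A (S m)). nra. Qed.

Lemma err_growth_nonneg m : 0 <= err_growth m.
Proof.
  induction m; simpl; [lra|].
  pose proof (siteF_nonneg d Dm A (S m)). pose proof (pert_growth_nonneg m). nra.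
Qed.

Lemma err_bound delta eps : 0 <= eps -> eps <= 1 -> is_pert n d Dm A eps delta ->
  forall m, (m <= n)%nat ->
  lnorm d Dm m (err delta m) <= eps * err_growth m /\
  lnorm d Dm m (lcontr Dm (perturbed A delta) m) <= pert_growth m.
Proof.
  intros He0 He1 Hp. induction m; intros Hm.
  - split.
    + replace (err delta 0) with (fun (_ : nat -> nat) (_ : nat) => 0)
        by (extensionality p; extensionality y; unfold err, lcontr; simpl; ring).
      unfold lnorm. rewrite lnorm2_zero, sqrt_0. simpl; lra.
    + unfold lnorm, lnorm2. simpl. rewrite HD0. simpl. unfold lcontr. simpl.
      replace (0 + 1 * (1 * 1)) with 1 by ring. rewrite sqrt_1. lra.
  - destruct (IHm ltac:(lia)) as [Herr Hpert].
    pose proof (siteF_nonneg d Dm A (S m)). pose proof (siteF_nonneg d Dm delta (S m)).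
    pose proof (Hp (S m) ltac:(lia) Hm).
    pose proof (lnorm_nonneg d Dm m (err delta m)).
    pose proof (lnorm_nonneg d Dm m (lcontr Dm (perturbed A delta) m)).
    split.
    + rewrite err_S. eapply Rle_trans; [apply lnorm_add|].
      pose proof (lnorm_attach_le d Dm m (err delta m) A (err_depends delta m)).
      pose proof (lnorm_attach_le d Dm m (lcontr Dm (perturbed A delta) m) delta (lcontr_depends _ _ m)).
      unfold err_source. simpl.
      assert (lnorm d Dm m (err delta m) * siteF d Dm A (S m) <= eps * err_growth m * siteF d Dm A (S m))
        by (apply Rmult_le_compat_r; auto).
      assert (lnorm d Dm m (lcontr Dm (perturbed A delta) m) * siteF d Dm delta (S m)
              <= pert_growth m * (eps * siteF d Dm A (S m))) by (apply Rmult_le_compat; auto).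
      lra.
    + rewrite lcontr_S. eapply Rle_trans; [apply lnorm_attach_le, lcontr_depends|]. simpl.
      pose proof (siteF_perturbed_le d Dm A delta (S m)).
      apply Rmult_le_compat; auto; [apply siteF_nonneg | nra].
Qed.

Lemma frobC_pos : contr_nonzero n d Dm A -> 0 < frobC n d Dm A.
Proof.
  intros [p [Hp Hc]]. unfold frobC. apply sqrt_lt_R0.
  eapply Rlt_le_trans; [|apply (msum_ge_term 1 n d _ p)];
    [| intros; nra | intros; apply Hp; lia].
  unfold contr. rewrite (seg_ext _ _ _ _ _ p).
  - unfold contr in Hc. pose proof (Rsqr_pos_lt _ Hc). unfold Rsqr in *. nra.
  - intros i H1 H2. destruct (Nat.leb_spec 1 i), (Nat.ltb_spec i (1 + n)); simpl; auto; lia.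
Qed.

Lemma relerr_lnorm delta : relerr n d Dm A delta = lnorm d Dm n (err delta n) / frobC n d Dm A.
Proof. unfold relerr, lnorm. rewrite lnorm2_full. reflexivity. Qed.

(* The first-order part of the i-th source is δ^{(i+1)} applied to the isometry C^{[1,i]}. *)
Lemma lnorm_source_le delta eps t i : 0 <= eps -> eps <= 1 -> is_pert n d Dm A eps delta ->
  propagation_bound t -> (S i <= n - 1)%nat ->
  lnorm d Dm n (propagate (S i) n (err_source delta i))
  <= eps * (sqrt (INR (Dm (S i))) * t (S i))
     + eps ^ 2 * (frobC n d Dm A * err_growth i * siteF d Dm A (S i)).
Proof.
  intros He0 He1 Hp Ht Hi. rewrite err_source_split, propagate_add.
  eapply Rle_trans; [apply lnorm_add|].
  assert (Hdelta : siteF d Dm delta (S i) <= eps * sqrt (INR (Dm (S i)))).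
  { rewrite <- siteF_canonical by lia. apply Hp; lia. }
  assert (Hfirst : lnorm d Dm n (propagate (S i) n (attach Dm delta (S i) (lcontr Dm A i)))
                   <= t (S i) * siteF d Dm delta (S i)).
  { rewrite <- lnorm_attach_orthonormal with (X := lcontr Dm A i)
      by (apply lcontr_depends || apply lcontr_orthonormal; lia).
    apply lnorm_propagate_le; auto; [lia | apply attach_depends, lcontr_depends]. }
  assert (Hsecond : lnorm d Dm n (propagate (S i) n (attach Dm delta (S i) (err delta i)))
                    <= frobC n d Dm A * (lnorm d Dm i (err delta i) * siteF d Dm delta (S i))).
  { eapply Rle_trans.
    - apply (lnorm_propagate_le _ (S i) _ propagation_bound_frobC); [lia | auto |].
      apply attach_depends, err_depends.
    - apply Rmult_le_compat_l; [apply frobC_nonneg | apply lnorm_attach_le, err_depends]. }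
  destruct (err_bound delta eps He0 He1 Hp i ltac:(lia)) as [Herr _].
  destruct (Ht (S i) ltac:(lia) Hi) as [Ht0 _].
  pose proof frobC_nonneg. pose proof (siteF_nonneg d Dm delta (S i)).
  pose proof (lnorm_nonneg d Dm i (err delta i)). pose proof (err_growth_nonneg i).
  rewrite (siteF_canonical (S i)) by lia.
  assert (t (S i) * siteF d Dm delta (S i) <= t (S i) * (eps * sqrt (INR (Dm (S i)))))
    by (apply Rmult_le_compat_l; auto).
  assert (lnorm d Dm i (err delta i) * siteF d Dm delta (S i)
          <= (eps * err_growth i) * (eps * sqrt (INR (Dm (S i))))) by (apply Rmult_le_compat; auto).
  assert (frobC n d Dm A * (lnorm d Dm i (err delta i) * siteF d Dm delta (S i))
          <= frobC n d Dm A * ((eps * err_growth i) * (eps * sqrt (INR (Dm (S i))))))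
    by (apply Rmult_le_compat_l; auto).
  nra.
Qed.

(* The last source is not propagated; its first-order part is ||δ^{(n)}||_F <= eps ||C||_F. *)
Lemma lnorm_last_source_le delta eps : 0 <= eps -> eps <= 1 -> is_pert n d Dm A eps delta ->
  lnorm d Dm n (err_source delta (n - 1))
  <= eps * frobC n d Dm A + eps ^ 2 * (err_growth (n - 1) * frobC n d Dm A).
Proof.
  intros He0 He1 Hp. rewrite frobC_last_site.
  destruct (err_bound delta eps He0 He1 Hp (n - 1) ltac:(lia)) as [Herr _].
  pose proof (Hp n ltac:(lia) ltac:(lia)).
  pose proof (lnorm_attach_le d Dm (n - 1) (err delta (n - 1)) delta (err_depends delta (n - 1))).
  pose proof (lnorm_attach_orthonormal d Dm (n - 1) (lcontr Dm A (n - 1)) delta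
                (lcontr_depends _ _ _) (lcontr_orthonormal (n - 1) ltac:(lia))).
  pose proof (siteF_nonneg d Dm delta n). pose proof (lnorm_nonneg d Dm (n - 1) (err delta (n - 1))).
  pose proof (err_growth_nonneg (n - 1)). pose proof (siteF_nonneg d Dm A n).
  replace (S (n - 1)) with n in * by lia.
  rewrite err_source_split. eapply Rle_trans; [apply lnorm_add|].
  replace (S (n - 1)) with n by lia.
  assert (lnorm d Dm (n - 1) (err delta (n - 1)) * siteF d Dm delta n
          <= (eps * err_growth (n - 1)) * (eps * siteF d Dm A n)) by (apply Rmult_le_compat; auto).
  nra.
Qed.

Theorem first_order_bound : contr_nonzero n d Dm A ->
  exists K eps0 : R, 0 < eps0 /\ 0 <= K /\
  forall t, propagation_bound t -> forall eps delta, 0 <= eps -> eps <= eps0 ->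
  is_pert n d Dm A eps delta ->
  relerr n d Dm A delta
  <= eps * (1 + rsum (n - 1) (fun i => sqrt (INR (Dm (S i))) * t (S i) / frobC n d Dm A))
     + K * eps ^ 2.
Proof.
  intros Hnz. pose proof (frobC_pos Hnz) as HF. set (F := frobC n d Dm A) in *.
  set (K0 := rsum (n - 1) (fun i => F * err_growth i * siteF d Dm A (S i)) + err_growth (n - 1) * F).
  assert (HK0 : 0 <= K0).
  { unfold K0. pose proof (err_growth_nonneg (n - 1)).
    assert (0 <= rsum (n - 1) (fun i => F * err_growth i * siteF d Dm A (S i))); [|nra].
    apply rsum_nonneg; intros. pose proof (err_growth_nonneg i).
    pose proof (siteF_nonneg d Dm A (S i)). apply Rmult_le_pos; [apply Rmult_le_pos|]; lra. }
  exists (K0 / F), 1. split; [lra|]. split; [apply Rmult_le_pos; [lra | apply Rlt_le, Rinv_0_lt_compat; lra]|].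
  intros t Ht eps delta He0 He1 Hp. rewrite relerr_lnorm.
  set (S1 := rsum (n - 1) (fun i => sqrt (INR (Dm (S i))) * t (S i))).
  assert (HN : lnorm d Dm n (err delta n) <= eps * (S1 + F) + eps ^ 2 * K0).
  { rewrite err_telescope. eapply Rle_trans; [apply lnorm_rsum|].
    rewrite (rsum_last n) by lia. replace (S (n - 1)) with n by lia. rewrite propagate_id.
    pose proof (lnorm_last_source_le delta eps He0 He1 Hp).
    assert (rsum (n - 1) (fun i => lnorm d Dm n (propagate (S i) n (err_source delta i)))
            <= rsum (n - 1) (fun i => eps * (sqrt (INR (Dm (S i))) * t (S i))
                                      + eps ^ 2 * (F * err_growth i * siteF d Dm A (S i)))).
    { apply rsum_le. intros i Hi. apply lnorm_source_le; auto; lia. }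
    rewrite rsum_add, !rsum_scal in H0.
    eapply Rle_trans; [apply Rplus_le_compat; [exact H0 | exact H]|].
    unfold K0, S1. fold F. lra. }
  apply (Rmult_le_compat_r (/ F)) in HN; [|apply Rlt_le, Rinv_0_lt_compat; lra].
  unfold Rdiv. eapply Rle_trans; [apply HN|]. right.
  rewrite (rsum_ext _ _ (fun i => / F * (sqrt (INR (Dm (S i))) * t (S i)))), rsum_scal
    by (intros; unfold Rdiv; ring).
  fold S1. field. lra.
Qed.

End Canonical.

Lemma relerr_first_order n d Dm D A : mps_shape n Dm ->
  (forall j, (1 <= j)%nat -> (j <= n - 1)%nat -> (Dm j <= D)%nat) ->
  left_canonical n d Dm A -> contr_nonzero n d Dm A ->
  exists K eps0 : R, 0 < eps0 /\ 0 <= K /\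
  (forall t, propagation_bound n d Dm A t -> forall eps delta, 0 <= eps -> eps <= eps0 ->
     is_pert n d Dm A eps delta ->
     relerr n d Dm A delta
     <= eps * (1 + rsum (n - 1) (fun i => sqrt (INR (Dm (S i))) * t (S i) / frobC n d Dm A))
        + K * eps ^ 2) /\
  (forall eps delta, 0 <= eps -> eps <= eps0 -> is_pert n d Dm A eps delta ->
     relerr n d Dm A delta <= eps * (1 + INR (n - 1) * sqrt (INR D)) + K * eps ^ 2).
Proof.
  intros [Hn [HD0 HDn]] HD Hlc Hnz.
  destruct (first_order_bound n d Dm A Hn HD0 HDn Hlc Hnz) as [K [eps0 [Heps0 [HK Hbound]]]].
  exists K, eps0. do 3 (split; auto).
  intros eps delta H1 H2 H3.
  eapply Rle_trans; [apply (Hbound _ (propagation_bound_frobC n d Dm A Hn HD0 HDn Hlc) eps delta); auto|].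
  pose proof (frobC_pos n d Dm A Hn HD0 HDn Hnz) as HF.
  assert (rsum (n - 1) (fun i => sqrt (INR (Dm (S i))) * frobC n d Dm A / frobC n d Dm A)
          <= INR (n - 1) * sqrt (INR D)).
  { apply rsum_le_const. intros i Hi.
    replace (sqrt (INR (Dm (S i))) * frobC n d Dm A / frobC n d Dm A)
      with (sqrt (INR (Dm (S i)))) by (field; lra).
    apply sqrt_le_1_alt, le_INR, HD; lia. }
  apply Rplus_le_compat_r. apply Rmult_le_compat_l; lra.
Qed.

(** * Tightness *)

Lemma siteF_unit_entry d Dm B j c : 0 <= c ->
  (0 < Dm (j - 1))%nat -> (0 < d j)%nat -> (0 < Dm j)%nat ->
  (forall a q b, (a < Dm (j - 1))%nat -> (q < d j)%nat -> (b < Dm j)%nat ->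
     B j a q b = if andb (andb (Nat.eqb a 0) (Nat.eqb q 0)) (Nat.eqb b 0) then c else 0) ->
  siteF d Dm B j = c.
Proof.
  intros Hc Ha Hq Hb HB. unfold siteF. rewrite <- (sqrt_pow2 c) by auto. f_equal.
  rewrite (rsum_ext _ _ (fun a => (if Nat.eqb a 0 then 1 else 0) * c ^ 2));
    [apply (rsum_delta _ 0 (fun _ => c ^ 2)); auto|].
  intros a Ha'.
  rewrite (rsum_ext _ _ (fun q => (if Nat.eqb q 0 then 1 else 0) * ((if Nat.eqb a 0 then 1 else 0) * c ^ 2)));
    [apply (rsum_delta _ 0 (fun _ => _)); auto|].
  intros q Hq'.
  rewrite (rsum_ext _ _ (fun b => (if Nat.eqb b 0 then 1 else 0) *
             ((if Nat.eqb q 0 then 1 else 0) * ((if Nat.eqb a 0 then 1 else 0) * c ^ 2))));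
    [apply (rsum_delta _ 0 (fun _ => _)); auto|].
  intros b Hb'. rewrite HB by auto.
  destruct (Nat.eqb a 0), (Nat.eqb q 0), (Nat.eqb b 0); simpl; ring.
Qed.

Lemma one_add_mul_le_pow c k : 0 <= c -> 1 + INR k * c <= (1 + c) ^ k.
Proof.
  intros Hc. induction k; [simpl; lra|]. rewrite S_INR. simpl. pose proof (pos_INR k).
  assert ((1 + c) * (1 + INR k * c) <= (1 + c) * (1 + c) ^ k) by (apply Rmult_le_compat_l; lra).
  nra.
Qed.

(* Site 1 is the identity from p_1 to b_1 (so d_1 = D), the middle sites are identities on the
   bond with trivial physical leg, and site n reads off b_{n-1} = 0.  The perturbation puts
   eps sqrt D, i.e. eps ||C^(j)||_F, into the (0,0,0) entry of every site j < n and is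
   eps C^(n) at site n.  At p = 0 the entry of C is 1 and that of Ĉ is (1 + eps sqrt D)^(n-1) (1 + eps). *)
Definition tight_d (D : nat) : nat -> nat := fun j => if Nat.eqb j 1 then D else 1%nat.

Definition tight_Dm (n D : nat) : nat -> nat :=
  fun j => if Nat.eqb j 0 then 1%nat else if Nat.leb n j then 1%nat else D.

Definition tight_A (n : nat) : site := fun j a q b =>
  if Nat.eqb j n then (if andb (Nat.eqb a 0) (Nat.eqb q 0) then 1 else 0)
  else if Nat.eqb j 1 then (if Nat.eqb q b then 1 else 0)
  else (if Nat.eqb a b then 1 else 0).

Definition tight_delta (n D : nat) (eps : R) : site := fun j a q b =>
  if Nat.eqb j n then eps * tight_A n j a q b
  else if andb (andb (Nat.eqb a 0) (Nat.eqb q 0)) (Nat.eqb b 0) then eps * sqrt (INR D) else 0.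

Section Tight.
Variables n D : nat.
Hypothesis Hn : (1 <= n)%nat.
Hypothesis HD : (1 <= D)%nat.

Lemma tight_shape : mps_shape n (tight_Dm n D).
Proof.
  unfold mps_shape, tight_Dm. simpl. repeat split; auto.
  destruct (Nat.eqb_spec n 0); [lia|]. rewrite Nat.leb_refl. auto.
Qed.

Lemma tight_Dm_pos j : (0 < tight_Dm n D j)%nat.
Proof. unfold tight_Dm. destruct (Nat.eqb j 0), (Nat.leb n j); lia. Qed.

Lemma tight_d_pos j : (0 < tight_d D j)%nat.
Proof. unfold tight_d. destruct (Nat.eqb j 1); lia. Qed.

Lemma tight_Dm_mid j : (1 <= j)%nat -> (j <= n - 1)%nat -> tight_Dm n D j = D.
Proof.
  intros. unfold tight_Dm. destruct (Nat.eqb_spec j 0); [lia|].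
  destruct (Nat.leb_spec n j); [lia|]. auto.
Qed.

Lemma tight_canonical : left_canonical n (tight_d D) (tight_Dm n D) (tight_A n).
Proof.
  intros j H1 H2 b b' Hb Hb'. rewrite tight_Dm_mid in Hb, Hb' by auto. unfold tight_A.
  destruct (Nat.eqb_spec j n); [lia|]. unfold tight_d. destruct (Nat.eqb_spec j 1).
  - subst. simpl. rewrite (rsum_delta D b (fun q => if Nat.eqb q b' then 1 else 0)) by auto. ring.
  - rewrite (tight_Dm_mid (j - 1)) by lia.
    rewrite (rsum_ext _ _ (fun a => (if Nat.eqb a b then 1 else 0) * (if Nat.eqb a b' then 1 else 0)))
      by (intros; simpl; ring).
    apply (rsum_delta D b (fun a => if Nat.eqb a b' then 1 else 0)); auto.
Qed.

Lemma tight_lcontr_zero eps m y : (m < n)%nat ->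
  lcontr (tight_Dm n D) (perturbed (tight_A n) (tight_delta n D eps)) m (fun _ => O) y
  = (1 + eps * sqrt (INR D)) ^ m * (if Nat.eqb y 0 then 1 else 0).
Proof.
  revert y. induction m; intros y Hm.
  - unfold lcontr. simpl. destruct y; simpl; ring.
  - rewrite lcontr_S. unfold attach. replace (S m - 1)%nat with m by lia.
    rewrite (rsum_ext _ _ (fun z => (if Nat.eqb z 0 then 1 else 0) * ((1 + eps * sqrt (INR D)) ^ m *
               perturbed (tight_A n) (tight_delta n D eps) (S m) z O y)))
      by (intros z _; rewrite IHm by lia; ring).
    rewrite rsum_delta by apply tight_Dm_pos.
    unfold perturbed, tight_A, tight_delta. destruct (Nat.eqb_spec (S m) n); [lia|]. simpl.
    destruct (Nat.eqb_spec m 0), y; simpl; ring.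
Qed.

Lemma tight_contr_zero eps :
  contr n (tight_Dm n D) (perturbed (tight_A n) (tight_delta n D eps)) (fun _ => O)
  = (1 + eps * sqrt (INR D)) ^ (n - 1) * (1 + eps).
Proof.
  change (contr n (tight_Dm n D) (perturbed (tight_A n) (tight_delta n D eps)) (fun _ => O))
    with (lcontr (tight_Dm n D) (perturbed (tight_A n) (tight_delta n D eps)) n (fun _ => O) O).
  transitivity (lcontr (tight_Dm n D) (perturbed (tight_A n) (tight_delta n D eps)) (S (n - 1))
                  (fun _ => O) O); [f_equal; lia|].
  rewrite lcontr_S. unfold attach.
  replace (S (n - 1) - 1)%nat with (n - 1)%nat by lia.
  rewrite (rsum_ext _ _ (fun z => (if Nat.eqb z 0 then 1 else 0) * ((1 + eps * sqrt (INR D)) ^ (n - 1) *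
             perturbed (tight_A n) (tight_delta n D eps) (S (n - 1)) z O O)))
    by (intros z _; rewrite tight_lcontr_zero by lia; ring).
  rewrite rsum_delta by apply tight_Dm_pos. replace (S (n - 1)) with n by lia.
  unfold perturbed, tight_delta, tight_A. rewrite Nat.eqb_refl. simpl. ring.
Qed.

Lemma tight_perturbed_0 : perturbed (tight_A n) (tight_delta n D 0) = tight_A n.
Proof.
  extensionality j; extensionality a; extensionality q; extensionality b.
  unfold perturbed, tight_delta. destruct (Nat.eqb j n); [ring|].
  destruct (andb (andb (Nat.eqb a 0) (Nat.eqb q 0)) (Nat.eqb b 0)); ring.
Qed.

Lemma tight_contr_zero_unperturbed : contr n (tight_Dm n D) (tight_A n) (fun _ => O) = 1.
Proof.
  rewrite <- tight_perturbed_0, tight_contr_zero. simpl.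
  rewrite Rmult_0_l, Rplus_0_r, pow1. ring.
Qed.

Lemma tight_nonzero : contr_nonzero n (tight_d D) (tight_Dm n D) (tight_A n).
Proof.
  exists (fun _ => O). split; [intros; apply tight_d_pos|].
  rewrite tight_contr_zero_unperturbed. lra.
Qed.

Lemma tight_siteF_last : siteF (tight_d D) (tight_Dm n D) (tight_A n) n = 1.
Proof.
  destruct tight_shape as [_ [_ HDn]].
  apply siteF_unit_entry; [lra | apply tight_Dm_pos | apply tight_d_pos | apply tight_Dm_pos|].
  intros a q b _ _ Hb. rewrite HDn in Hb. replace b with O by lia.
  unfold tight_A. rewrite Nat.eqb_refl. destruct (Nat.eqb a 0), (Nat.eqb q 0); auto.
Qed.

Lemma tight_frobC : frobC n (tight_d D) (tight_Dm n D) (tight_A n) = 1.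
Proof.
  destruct tight_shape as [_ [HD0 HDn]].
  rewrite (frobC_last_site n _ _ _ Hn HD0 HDn tight_canonical). apply tight_siteF_last.
Qed.

Lemma tight_is_pert eps : 0 <= eps ->
  is_pert n (tight_d D) (tight_Dm n D) (tight_A n) eps (tight_delta n D eps).
Proof.
  intros He j H1 H2. destruct (Nat.eqb_spec j n).
  - subst j. rewrite <- siteF_scal by auto. right. unfold siteF, tight_delta.
    rewrite Nat.eqb_refl. reflexivity.
  - destruct tight_shape as [_ [HD0 HDn]].
    rewrite (siteF_canonical n _ _ _ tight_canonical j), tight_Dm_mid by lia.
    right. apply siteF_unit_entry;
      [pose proof (sqrt_pos (INR D)); nra | apply tight_Dm_pos | apply tight_d_pos | apply tight_Dm_pos|].
    intros a q b _ _ _. unfold tight_delta. destruct (Nat.eqb_spec j n); [lia|]. auto.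
Qed.

Lemma tight_relerr_lower eps : 0 <= eps ->
  eps * (1 + INR (n - 1) * sqrt (INR D))
  <= relerr n (tight_d D) (tight_Dm n D) (tight_A n) (tight_delta n D eps).
Proof.
  intros He. unfold relerr. rewrite tight_frobC, Rdiv_1_r.
  set (c := eps * sqrt (INR D)). assert (Hc : 0 <= c) by (pose proof (sqrt_pos (INR D)); unfold c; nra).
  pose proof (one_add_mul_le_pow c (n - 1) Hc). pose proof (pos_INR (n - 1)).
  assert (Hx : eps * (1 + INR (n - 1) * sqrt (INR D)) <= (1 + c) ^ (n - 1) * (1 + eps) - 1).
  { assert ((1 + INR (n - 1) * c) * (1 + eps) <= (1 + c) ^ (n - 1) * (1 + eps))
      by (apply Rmult_le_compat_r; lra).
    assert (0 <= INR (n - 1) * c * eps) by (apply Rmult_le_pos; [apply Rmult_le_pos|]; lra).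
    unfold c in *. nra. }
  assert (0 <= eps * (1 + INR (n - 1) * sqrt (INR D)))
    by (apply Rmult_le_pos; [lra | pose proof (sqrt_pos (INR D)); nra]).
  eapply Rle_trans; [apply Hx|].
  rewrite <- (sqrt_pow2 ((1 + c) ^ (n - 1) * (1 + eps) - 1)) by lra.
  apply sqrt_le_1_alt.
  eapply Rle_trans; [|apply (msum_ge_term 1 n (tight_d D) _ (fun _ => O))];
    [| intros; apply pow2_ge_0 | intros; apply tight_d_pos].
  right. cbv beta.
  replace (fun i : nat => if andb (Nat.leb 1 i) (Nat.ltb i (1 + n)) then O else O)
    with (fun _ : nat => O) by (extensionality i; destruct (andb (Nat.leb 1 i) (Nat.ltb i (1 + n))); auto).
  rewrite tight_contr_zero, tight_contr_zero_unperturbed. reflexivity.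
Qed.

End Tight.

Lemma lub_ratio_limit (E : R -> R -> Prop) (L K eps0 : R) : 0 < eps0 -> 0 <= K ->
  (forall eps, 0 < eps -> eps <= eps0 ->
     (exists r, E eps r /\ eps * L <= r) /\ (forall r, E eps r -> r <= eps * L + K * eps ^ 2)) ->
  forall eta, 0 < eta -> exists rho, 0 < rho /\
    forall eps, 0 < eps -> eps < rho -> exists sup, is_lub (E eps) sup /\ Rabs (sup / eps - L) < eta.
Proof.
  intros Heps0 HK HE eta Heta. exists (Rmin eps0 (eta / (K + 1))).
  split; [apply Rmin_glb_lt; [lra | apply Rdiv_lt_0_compat; lra]|].
  intros eps He Hr.
  pose proof (Rmin_l eps0 (eta / (K + 1))). pose proof (Rmin_r eps0 (eta / (K + 1))).
  destruct (HE eps He ltac:(lra)) as [[r0 [Hr0 Hlow]] Hup].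
  destruct (completeness (E eps)) as [sup [Hub Hlub]];
    [exists (eps * L + K * eps ^ 2); intros r Hr'; auto | exists r0; auto|].
  exists sup. split; [split; auto|].
  assert (Hlo : L <= sup / eps).
  { apply (Rmult_le_reg_r eps); [lra|]. unfold Rdiv. rewrite Rmult_assoc, Rinv_l by lra.
    pose proof (Hub r0 Hr0). lra. }
  assert (Hhi : sup / eps <= L + K * eps).
  { apply (Rmult_le_reg_r eps); [lra|]. unfold Rdiv. rewrite Rmult_assoc, Rinv_l by lra.
    assert (sup <= eps * L + K * eps ^ 2) by (apply Hlub; intros r Hr'; auto). nra. }
  assert (K * eps < eta).
  { assert ((K + 1) * eps < (K + 1) * (eta / (K + 1))) by (apply Rmult_lt_compat_l; lra).
    replace ((K + 1) * (eta / (K + 1))) with eta in * by (field; lra). nra. }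
  rewrite Rabs_pos_eq; lra.
Qed.

Theorem mainTheorem12 :
  (forall (n : nat) (d Dm : nat -> nat) (D : nat) (A : site) (s : nat -> R),
     mps_shape n Dm ->
     (forall j, (1 <= j)%nat -> (j <= n - 1)%nat -> (Dm j <= D)%nat) ->
     left_canonical n d Dm A ->
     contr_nonzero n d Dm A ->
     (forall j, (1 <= j)%nat -> (j <= n - 1)%nat -> is_spec_right n d Dm A j (s j)) ->
     exists K eps0 : R, 0 < eps0 /\
       forall (eps : R) (delta : site),
         0 <= eps -> eps <= eps0 ->
         is_pert n d Dm A eps delta ->
         relerr n d Dm A delta
           <= eps * (1 + rsum (n - 1) (fun i =>
                  sqrt (INR (Dm (S i))) * s (S i) / frobC n d Dm A))
              + K * eps ^ 2
         /\
         relerr n d Dm A delta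
           <= eps * (1 + INR (n - 1) * sqrt (INR D)) + K * eps ^ 2)
  /\
  (forall (n D : nat) (eta : R),
     (1 <= n)%nat -> (1 <= D)%nat -> 0 < eta ->
     exists (d Dm : nat -> nat) (A : site) (L : R),
       mps_shape n Dm /\
       (forall j, (1 <= j)%nat -> (j <= n - 1)%nat -> Dm j = D) /\
       left_canonical n d Dm A /\
       contr_nonzero n d Dm A /\
       Rabs (L - (1 + INR (n - 1) * sqrt (INR D))) < eta /\
       (forall eta' : R, 0 < eta' ->
          exists rho : R, 0 < rho /\
            forall eps : R, 0 < eps -> eps < rho ->
              exists sup : R,
                is_lub (fun r => exists delta : site,
                          is_pert n d Dm A eps delta /\ r = relerr n d Dm A delta) sup
                /\ Rabs (sup / eps - L) < eta')).
Proof.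
  split.
  - intros n d Dm D A s Hsh HD Hlc Hnz Hs.
    destruct (relerr_first_order n d Dm D A Hsh HD Hlc Hnz) as [K [eps0 [Heps0 [_ [Hspec Hdim]]]]].
    destruct Hsh as [Hn [HD0 HDn]].
    exists K, eps0. split; auto. intros eps delta H1 H2 H3. split; auto.
    apply Hspec; auto. apply propagation_bound_spec; auto.
  - intros n D eta Hn HD Heta.
    set (L := 1 + INR (n - 1) * sqrt (INR D)).
    exists (tight_d D), (tight_Dm n D), (tight_A n), L.
    pose proof (tight_shape n D Hn HD) as Hsh.
    assert (Hmid : forall j, (1 <= j)%nat -> (j <= n - 1)%nat -> tight_Dm n D j = D)
      by (intros; apply tight_Dm_mid; auto).
    pose proof (tight_canonical n D Hn HD) as Hlc. pose proof (tight_nonzero n D Hn HD) as Hnz.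
    do 4 (split; auto). split; [rewrite Rminus_diag, Rabs_R0; auto|].
    destruct (relerr_first_order n _ _ D _ Hsh ltac:(intros; rewrite Hmid; auto) Hlc Hnz)
      as [K [eps0 [Heps0 [HK [_ Hdim]]]]].
    apply (lub_ratio_limit _ L K eps0); auto.
    intros eps He He0. split.
    + exists (relerr n (tight_d D) (tight_Dm n D) (tight_A n) (tight_delta n D eps)).
      split; [exists (tight_delta n D eps); split; auto; apply tight_is_pert; auto; lra|].
      apply tight_relerr_lower; auto; lra.
    + intros r [delta [Hp ->]]. apply Hdim; auto; lra.
Qed.
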